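(* Let $K,L$ be fields, let $n\ge m\ge 1$ be integers, and let $\sigma_1,\ldots,\sigma_n,\tau_1,\ldots,\tau_m\colon K\to L$ be field homomorphisms such that $\prod_{i=1}^n \sigma_i(a)=\prod_{j=1}^m \tau_j(a)$ for all $a\in K$. Then one of the following holds: (1) $n=m$ and there is a permutation $g\in S_n$ with $\tau_i=\sigma_{g(i)}$ for $1\le i\le n$; (2) $\operatorname{char}K=\operatorname{char}L=p>0$, and there are indices $1\le i_1<i_2<\cdots<i_p\le n$ with $\sigma_{i_1}=\sigma_{i_2}=\cdots=\sigma_{i_p}$. Moreover, for every $1\le j\le m$ there exist an integer $l$ with $-(m-1)\le l(p-1)\le n-1$ and an index $1\le i\le n$ with $\tau_j=\sigma_i\mathbf{p}^l$; and for every $1\le i\le n$ there exist an integer $l$ with $-(n-1)\le l(p-1)\le m-1$ and an index $1\le j\le m$ with $\sigma_i=\tau_j\mathbf{p}^l$.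
   Context: $\mathbf{p}$ denotes the Frobenius endomorphism $x\mapsto x^p$ of $L$. For field homomorphisms $\sigma,\tau\colon K\to L$ and an integer $l$, the equation $\tau=\sigma\mathbf{p}^l$ means: if $l\ge 0$, $\tau(a)=\sigma(a)^{p^l}$ for all $a\in K$; if $l<0$, $\tau(a)^{p^{-l}}=\sigma(a)$ for all $a\in K$ (i.e. $\sigma=\tau\mathbf{p}^{-l}$). *)

From HB Require Import structures.
From mathcomp Require Import all_boot all_order all_algebra all_fingroup.
Set Implicit Arguments. Unset Strict Implicit. Unset Printing Implicit Defensive.
Import Order.TTheory GRing.Theory Num.Theory.
Local Open Scope ring_scope.

(* frob_eq p sigma tau l  <->  tau = sigma p^l  (Frobenius twist convention):
   l >= 0 : tau a = (sigma a)^(p^l) for all a;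
   l < 0  : (tau a)^(p^(-l)) = sigma a for all a. *)
Definition frob_eq (K L : fieldType) (p : nat) (sigma tau : K -> L) (l : int)
  : Prop :=
  match l with
  | Posz k => forall a, tau a = sigma a ^+ (p ^ k)
  | Negz k => forall a, tau a ^+ (p ^ k.+1) = sigma a
  end.

From HB Require Import structures.
From mathcomp Require Import all_boot all_order all_algebra all_fingroup.
From mathcomp Require Import boolp ring zify.
Import Order.TTheory GRing.Theory Num.Theory.
Local Open Scope ring_scope.
Set Implicit Arguments. Unset Strict Implicit. Unset Printing Implicit Defensive.

(* 1. Dedekind's lemma, in the grouped form: in a linear relation between
      multiplicative characters, the coefficients attached to equal characters
      sum to zero.  Consequently two families of characters with the same sum
      have, for each character, the same number of members equal to it (as an
      element of L).
   2. Cancellation (lemma [cancellation_all]): if prod_i s_i = prod_j t_j and no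
      multiplicity k of either family vanishes in L, the families coincide as
      multisets.  By strong induction on their size: expanding
      prod_i s_i(x + y) as a sum over subsets W of the characters
      chi_W(x, y) = prod_(W) s(x) * prod_(not W) s(y) of K x K, Dedekind
      compares the classes of chi_{i}, and the induction hypothesis shows that
      such a class consists of the singletons {w} with s_w = s_i.
   3. In characteristic p, p equal factors f may be merged into the single
      homomorphism f^p without changing the product.  Merging until the
      multiplicities become admissible for 2 and keeping track of how often
      each factor is twisted by the Frobenius gives the bounds on l(p-1).
   The theorem follows: case (1) when L has characteristic 0 or every
   multiplicity of the sigma_i is below p, case (2) otherwise. *)

Definition is_char {L : fieldType} (M : Type) (mul : M -> M -> M) (one : M)
  (chi : M -> L) := chi one = 1 /\ forall x y, chi (mul x y) = chi x * chi y.

Lemma dedekind_grouped {L : fieldType} (M : Type) (mul : M -> M -> M) (one : M)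
  (I : finType) (chi : I -> M -> L) (c : I -> L) (D : {set I}) :
  (forall i, i \in D -> is_char mul one (chi i)) ->
  (forall x, \sum_(i in D) c i * chi i x = 0) ->
  forall h, \sum_(i in D | chi i == h) c i = 0.
Proof.
move: {2}#|D| (leqnn #|D|) => N; elim: N D c => [|N IH] D c.
  rewrite leqn0 => /eqP/cards0_eq -> _ _ h.
  by rewrite big_pred0 // => i; rewrite inE.
move=> HD Hchar Hsum h.
have [[l lD nl]|alleq] := pselect (exists2 l, l \in D & chi l != h); last first.
  (* all characters equal h: evaluate the relation at one *)
  rewrite -[RHS](Hsum one) big_mkcondr /=; apply: eq_bigr => i iD.
  case: eqP => [_|ne]; first by rewrite (Hchar i iD).1 mulr1.
  by exfalso; apply: alleq; exists i => //; apply/eqP.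
have [b /eqP hb] : exists b, ~ (h b = chi l b).
  apply/existsNP => H; move/eqP: nl; apply; apply/funext => b; exact/esym/H.
(* Subtract chi_l(b) times the relation from its translate by b: this kills
   the class of chi_l and rescales the class of h by h(b) - chi_l(b) != 0. *)
pose D' := [set i in D | chi i != chi l].
pose c' := fun i => c i * (chi i b - chi l b).
have D'D : D' \subset D by apply/subsetP => i; rewrite inE => /andP[].
have cardD' : (#|D'| <= N)%N.
  have : D' \proper D.
    by apply/properP; split => //; exists l => //; rewrite inE eqxx andbF.
  by move/proper_card => lt; rewrite -ltnS; apply: leq_trans HD.
have Hsum' : forall x, \sum_(i in D') c' i * chi i x = 0.
  move=> x; transitivity (\sum_(i in D) c' i * chi i x).
    rewrite [RHS](big_setID D') /= (setIidPr D'D).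
    rewrite [X in _ + X]big1 ?addr0 // => i /setDP [iD].
    by rewrite inE iD /= negbK => /eqP ee; rewrite /c' ee subrr mulr0 mul0r.
  transitivity (\sum_(i in D) c i * chi i (mul b x)
                - chi l b * \sum_(i in D) c i * chi i x).
    rewrite mulr_sumr -sumrB; apply: eq_bigr => i iD.
    by rewrite (Hchar i iD).2 /c'; ring.
  by rewrite !Hsum mulr0 subr0.
have := IH D' c' cardD' (fun i iD' => Hchar i (subsetP D'D i iD')) Hsum' h.
have -> : \sum_(i in D' | chi i == h) c' i =
          (\sum_(i in D | chi i == h) c i) * (h b - chi l b).
  rewrite mulr_suml; apply: eq_big => [i|i /andP[_ /eqP ee]]; last by rewrite /c' ee.
  rewrite inE; case: (boolP (chi i == h)) => [/eqP ->|]; last by rewrite !andbF.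
  by rewrite eq_sym nl andbT.
by move/eqP; rewrite mulf_eq0 subr_eq0 (negbTE hb) orbF => /eqP.
Qed.

Lemma dedekind_count {L : fieldType} (M : Type) (mul : M -> M -> M) (one : M)
  (X Y : finType) (f : X -> M -> L) (g : Y -> M -> L) (A : {set X}) (B : {set Y}) :
  (forall i, i \in A -> is_char mul one (f i)) ->
  (forall j, j \in B -> is_char mul one (g j)) ->
  (forall x, \sum_(i in A) f i x = \sum_(j in B) g j x) ->
  forall h, #|[set i in A | f i == h]|%:R = #|[set j in B | g j == h]|%:R :> L.
Proof.
move=> fA gB fg h.
pose D : {set X + Y} :=
  [set u | match u with inl i => i \in A | inr j => j \in B end].
pose chi u := match u with inl i => f i | inr j => g j end.
pose c (u : X + Y) : L := if u is inl _ then 1 else -1.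
have split (P : pred (X + Y)) (F : X + Y -> L) : \sum_(u in D | P u) F u =
    \sum_(i in A | P (inl i)) F (inl i) + \sum_(j in B | P (inr j)) F (inr j).
  rewrite big_mkcond big_sumType /=.
  by congr (_ + _); rewrite [RHS]big_mkcond; apply: eq_bigr => i _; rewrite inE.
have card_sum (Z : finType) (E : {set Z}) (z : Z -> M -> L) :
    #|[set i in E | z i == h]|%:R = \sum_(i in E | z i == h) 1 :> L.
  by rewrite -sum1_card natr_sum; apply: eq_bigl => i; rewrite inE.
have Dchar u : u \in D -> is_char mul one (chi u).
  by case: u => i; rewrite inE; [exact: fA | exact: gB].
have Dsum x : \sum_(u in D) c u * chi u x = 0.
  rewrite -big_condT split /= !big_condT.
  under eq_bigr do rewrite mul1r.
  by under [X in _ + X]eq_bigr do rewrite mulN1r; rewrite sumrN fg subrr.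
have := dedekind_grouped Dchar Dsum h.
by rewrite split /= sumrN -!card_sum => /eqP; rewrite subr_eq0 => /eqP.
Qed.

Lemma prodD_subsets (R : comPzRingType) (I : finType) (F G : I -> R) (A : {set I}) :
  \prod_(i in A) (F i + G i) =
  \sum_(S in powerset A) (\prod_(i in S) F i) * \prod_(i in A :\: S) G i.
Proof.
pose F' i := if i \in A then F i else 0.
pose G' i := if i \in A then G i else 1.
rewrite big_mkcond /=.
transitivity (\prod_i (F' i + G' i)).
  by apply: eq_bigr => i _; rewrite /F' /G'; case: (i \in A); rewrite ?add0r.
rewrite bigA_distr (bigID (fun S => S \in powerset A)) /=.
rewrite [X in _ + X]big1 ?addr0; last first.
  move=> S; rewrite powersetE => /subsetPn [i iS niA].
  by rewrite (bigD1 i) //= iS /F' (negbTE niA) mul0r.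
apply: eq_bigr => S; rewrite powersetE => /subsetP SA.
rewrite (bigID (mem S)) /=; congr (_ * _).
  rewrite big_mkcond [RHS]big_mkcond; apply: eq_bigr => i _.
  by case: (boolP (i \in S)) => // iS; rewrite /F' (SA i iS).
rewrite big_mkcond [RHS]big_mkcond; apply: eq_bigr => i _.
by rewrite in_setD /G'; case: (boolP (i \in S)).
Qed.

Lemma perm_from_count (T : eqType) (u v : seq T) :
  (forall x, x \in u -> count_mem x u = count_mem x v) ->
  (size v <= size u)%N -> perm_eq u v.
Proof.
move=> h sz.
have /count_subseqP [w sw pw] : forall x, (count_mem x u <= count_mem x v)%N.
  by move=> x; case: (boolP (x \in u)) => [/h -> //|/count_memPn -> //].
have e : w == v.
  by rewrite -(size_subseq_leqif sw).2 eqn_leq (size_subseq sw) -(perm_size pw) sz.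
by rewrite -(eqP e).
Qed.

Section Cancellation.
Context {K L : fieldType}.

Definition ishom (f : K -> L) :=
  [/\ f 1 = 1, (forall a b, f (a * b) = f a * f b) & (forall a b, f (a + b) = f a + f b)].

Lemma hom0 f : ishom f -> f 0 = 0.
Proof. by case=> _ _ hD; apply: (addrI (f 0)); rewrite -hD !addr0. Qed.

Lemma hom_neq0 f a : ishom f -> a != 0 -> f a != 0.
Proof.
move=> [h1 hM _] a0; apply/negP => /eqP fa0.
by move: (hM a a^-1); rewrite divff // h1 fa0 mul0r; move/eqP; rewrite oner_eq0.
Qed.

Section Families.
Variables (I : finType) (s : I -> K -> L).
Implicit Types (A : {set I}).

Definition homs A := forall i, i \in A -> ishom (s i).

Lemma homs_sub A A' : A' \subset A -> homs A -> homs A'.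
Proof. by move=> sub h i /(subsetP sub) /h. Qed.

Lemma prod1 A : homs A -> \prod_(i in A) s i 1 = 1.
Proof. by move=> h; apply: big1 => i /h []. Qed.

Lemma prodM A a b : homs A ->
  \prod_(i in A) s i (a * b) = (\prod_(i in A) s i a) * \prod_(i in A) s i b.
Proof. by move=> h; rewrite -big_split; apply: eq_bigr => i /h []. Qed.

Lemma prod0 A : homs A -> A != set0 -> \prod_(i in A) s i 0 = 0.
Proof. by move=> h /set0Pn [i iA]; rewrite (bigD1 i) //= hom0 ?mul0r //; exact: h. Qed.

Definition fam_seq A : seq (K -> L) := [seq s i | i <- enum A].
Definition mult A f := #|[set i in A | s i == f]|.

(* No multiplicity of the family vanishes in L (automatic in characteristic 0,
   and in characteristic p when all multiplicities are below p). *)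
Definition nzmult A := forall f k, (0 < k <= mult A f)%N -> (k%:R : L) != 0.

Lemma count_fam_seq A f : count_mem f (fam_seq A) = mult A f.
Proof.
rewrite count_map -sum1_count big_enum_cond /= /mult -sum1_card.
by apply: eq_bigl => i; rewrite !inE.
Qed.

Lemma size_fam_seq A : size (fam_seq A) = #|A|.
Proof. by rewrite size_map cardE. Qed.

Lemma fam_seq1 i : fam_seq [set i] = [:: s i].
Proof. by rewrite /fam_seq enum_set1. Qed.

Lemma nzmult_sub A A' : A' \subset A -> nzmult A -> nzmult A'.
Proof.
move=> sub g f k /andP [k0 kc]; apply: (g f); rewrite k0 /=.
apply: (leq_trans kc); apply: subset_leq_card; apply/subsetP => i.
by rewrite !inE => /andP [/(subsetP sub) -> ->].
Qed.

Definition subset_char (C W : {set I}) : K * K -> L :=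
  fun xy => (\prod_(w in W) s w xy.1) * \prod_(w in C :\: W) s w xy.2.

Lemma subset_char_is_char C (W : {set I}) :
  homs C -> W \subset C -> is_char *%R 1 (subset_char C W).
Proof.
move=> hC sWC; have hW := homs_sub sWC hC; have hCW := homs_sub (subsetDl C W) hC.
rewrite /subset_char; split => [|x y] /=; first by rewrite !prod1 ?mulr1.
by rewrite !prodM //; ring.
Qed.

Lemma sum_subset_char C x y : homs C ->
  \sum_(W in powerset C) subset_char C (W : {set I}) (x, y) = \prod_(i in C) s i (x + y).
Proof.
move=> hC; rewrite (eq_bigr (fun i => s i x + s i y)); last by move=> i /hC [].
by rewrite prodD_subsets.
Qed.

End Families.

Definition prod_eq (I J : finType) (s : I -> K -> L) (A : {set I})
  (t : J -> K -> L) (B : {set J}) :=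
  forall a, \prod_(i in A) s i a = \prod_(j in B) t j a.

Lemma prod_eq_cancel (I J : finType) (s : I -> K -> L) (A : {set I})
  (t : J -> K -> L) (B : {set J}) i j :
  homs s A -> homs t B -> prod_eq s A t B -> i \in A -> j \in B -> s i = t j ->
  A :\ i != set0 -> B :\ j != set0 -> prod_eq s (A :\ i) t (B :\ j).
Proof.
move=> hs ht r iA jB e nA nB a.
case: (eqVneq a 0) => [->|a0].
  by rewrite !prod0 //; [exact: (homs_sub (subD1set _ _) ht) | exact: (homs_sub (subD1set _ _) hs)].
have := r a; rewrite (big_setD1 i) // (big_setD1 j) //= e.
by apply: mulfI; apply: hom_neq0 a0; apply: ht.
Qed.

Lemma mult_eq_of_natr_eq (I J : finType) (s : I -> K -> L) (A : {set I})
  (t : J -> K -> L) (B : {set J}) f :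
  nzmult s A -> nzmult t B -> (mult s A f)%:R = (mult t B f)%:R :> L ->
  mult s A f = mult t B f.
Proof.
move=> gs gt e.
wlog le : I J s t A B gs gt e / (mult t B f <= mult s A f)%N.
  move=> W; case: (leqP (mult t B f) (mult s A f)) => h; first exact: W.
  by apply/esym/W => //; apply: ltnW.
apply/eqP; rewrite eqn_leq le andbT leqNgt; apply/negP => lt.
have := gs f (mult s A f - mult t B f)%N.
by rewrite subn_gt0 lt leq_subr natrB // e subrr eqxx => /(_ isT).
Qed.

Lemma subset_char_eq (X Y : finType) (u : X -> K -> L) (C W : {set X})
  (v : Y -> K -> L) (C' W' : {set Y}) :
  homs u C -> homs v C' -> W \subset C -> W' \subset C' ->
  subset_char u C W = subset_char v C' W' <->
  (forall x, \prod_(w in W) u w x = \prod_(w in W') v w x) /\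
  (forall y, \prod_(w in C :\: W) u w y = \prod_(w in C' :\: W') v w y).
Proof.
move=> hu hv sW sW'.
have [uW uCW] : \prod_(w in W) u w 1 = 1 /\ \prod_(w in C :\: W) u w 1 = 1.
  by split; apply: prod1; [exact: homs_sub hu | exact: (homs_sub (subsetDl _ _) hu)].
have [vW vCW] : \prod_(w in W') v w 1 = 1 /\ \prod_(w in C' :\: W') v w 1 = 1.
  by split; apply: prod1; [exact: homs_sub hv | exact: (homs_sub (subsetDl _ _) hv)].
split => [e|[e1 e2]]; last by apply: funext => -[x y]; rewrite /subset_char /= e1 e2.
split => [x|y].
  by have := congr1 (fun f => f (x, 1)) e; rewrite /subset_char /= uCW vCW !mulr1.
by have := congr1 (fun f => f (1, y)) e; rewrite /subset_char /= uW vW !mul1r.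
Qed.

Definition cancellation N := forall (I J : finType) (s : I -> K -> L)
  (t : J -> K -> L) (A : {set I}) (B : {set J}),
  (#|A| <= N)%N -> (#|B| <= N)%N -> homs s A -> homs t B ->
  nzmult s A -> nzmult t B -> prod_eq s A t B -> perm_eq (fam_seq s A) (fam_seq t B).

Section Step.
Variables (N : nat) (IH : cancellation N).

Lemma subset_char_singleton (I X : finType) (s : I -> K -> L) (A : {set I}) i0
  (u : X -> K -> L) (C W : {set X}) :
  #|A| = N.+1 -> (1 < #|A|)%N -> i0 \in A -> homs s A -> nzmult s A ->
  (#|C| <= N.+1)%N -> homs u C -> nzmult u C -> W \subset C ->
  (forall x, \prod_(w in W) u w x = s i0 x) ->
  (forall y, \prod_(w in C :\: W) u w y = \prod_(i in A :\ i0) s i y) ->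
  exists2 w, w \in C & (W = [set w] /\ u w = s i0).
Proof.
move=> cA A2 i0A hs gs cC hu gu sWC e1 e2.
have cA1 : #|A :\ i0| = N by move: cA; rewrite (cardsD1 i0) i0A add1n => -[].
have A1ne : A :\ i0 != set0 by rewrite -card_gt0 cA1 -ltnS -cA.
have hA1 := homs_sub (subD1set A i0) hs.
(* W = C would make the nonempty product over A \ i0 constant. *)
have WN : (#|W| <= N)%N.
  rewrite leqNgt; apply/negP => lt.
  have /eqP WC : W == C by rewrite eqEcard sWC; apply: leq_trans cC _.
  by have := e2 0; rewrite WC setDv big_set0 prod0 // => /eqP; rewrite oner_eq0.
have cD : #|C :\: W| = (#|C| - #|W|)%N by rewrite cardsD (setIidPr sWC).
case: (pselect (exists2 w, w \in W & u w = s i0)) => [[w wW uw]|nw].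
  case: (boolP (W == [set w])) => [/eqP -> | neq].
    by exists w; [apply: (subsetP sWC) | ].
  (* Otherwise the induction hypothesis applied to C \ W and A \ i0 forces
     #|C \ W| = N, which is too large. *)
  have W2 : (1 < #|W|)%N.
    rewrite ltnNge; apply/negP => W1; move/negP: neq; apply.
    by rewrite eq_sym eqEcard sub1set wW cards1 W1.
  have le1 : (#|C| - #|W| <= N)%N by lia.
  have := @IH _ _ u s (C :\: W) (A :\ i0); rewrite cD cA1.
  move/(_ le1 (leqnn _) (homs_sub (subsetDl _ _) hu) hA1 (nzmult_sub (subsetDl _ _) gu)
         (nzmult_sub (subD1set _ _) gs) e2) /perm_size.
  by rewrite !size_fam_seq cD cA1; lia.
(* The induction hypothesis applied to W and {i0} puts s_i0 among the u_w. *)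
have s1A : [set i0] \subset A by rewrite sub1set.
have r : prod_eq u W s [set i0] by move=> a; rewrite e1 big_set1.
have := @IH _ _ u s W [set i0] WN.
rewrite cards1 -ltnS -cA A2 => /(_ isT (homs_sub sWC hu) (homs_sub s1A hs)
  (nzmult_sub sWC gu) (nzmult_sub s1A gs) r).
rewrite fam_seq1 => /perm_mem/(_ (s i0)); rewrite mem_seq1 eqxx => /mapP [w].
by rewrite mem_enum => wW e; exfalso; apply: nw; exists w.
Qed.

Lemma card_subset_char_class (I X : finType) (s : I -> K -> L) (A : {set I}) i0
  (u : X -> K -> L) (C : {set X}) :
  #|A| = N.+1 -> (1 < #|A|)%N -> i0 \in A -> homs s A -> nzmult s A ->
  (#|C| <= N.+1)%N -> homs u C -> nzmult u C -> prod_eq u C s A ->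
  #|[set W in powerset C | subset_char u C W == subset_char s A [set i0]]| =
  if (1 < #|C|)%N then mult u C (s i0) else 0%N.
Proof.
move=> cA A2 i0A hs gs cC hu gu r.
have s1A : [set i0] \subset A by rewrite sub1set.
have cA1 : #|A :\ i0| = N by move: cA; rewrite (cardsD1 i0) i0A add1n => -[].
have A1ne : A :\ i0 != set0 by rewrite -card_gt0 cA1 -ltnS -cA.
have class_single (W : {set X}) :
    W \in [set W in powerset C | subset_char u C W == subset_char s A [set i0]] ->
    exists2 w, w \in C & (W = [set w] /\ u w = s i0 /\
      forall y, \prod_(i in C :\ w) u i y = \prod_(i in A :\ i0) s i y).
  rewrite !inE => /andP [sWC /eqP /subset_char_eq].
  case/(_ hu hs sWC s1A) => e1 e2.
  have [w wC [eW uw]] := subset_char_singleton cA A2 i0A hs gs cC hu gu sWC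
    (fun x => etrans (e1 x) (big_set1 _ _ _)) e2.
  by exists w => //; split => //; split => // y; rewrite -e2 eW.
case: ifP => C2.
  transitivity #|[set [set w] | w in [set w in C | u w == s i0]]|; last first.
    by rewrite card_imset //; apply: set1_inj.
  apply: eq_card => W; apply/idP/imsetP.
    by move/class_single => [w wC [eW [uw _]]]; exists w => //; rewrite inE wC uw eqxx.
  move=> [w]; rewrite inE => /andP [wC /eqP uw] ->; rewrite !inE sub1set wC /=.
  apply/eqP/subset_char_eq => //; first by rewrite sub1set.
  split; first by move=> x; rewrite !big_set1 uw.
  apply: prod_eq_cancel => //.
  by rewrite -card_gt0; move: C2; rewrite (cardsD1 w) wC; lia.
apply/eqP; rewrite cards_eq0; apply/negPn/negP => /set0Pn [W /class_single [w wC [_ [_ e]]]].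
have C0 : C :\ w = set0.
  by apply/eqP; rewrite -cards_eq0; move: C2; rewrite (cardsD1 w) wC; lia.
have := e 0; rewrite C0 big_set0 prod0 // => [/eqP|]; first by rewrite oner_eq0.
exact: homs_sub (subD1set A i0) hs.
Qed.

(* Dedekind's lemma applied to the subset characters of s over A and of t over
   B: the multiplicity of s_i0 is the same in both families. *)
Lemma mult_step (I J : finType) (s : I -> K -> L) (t : J -> K -> L)
  (A : {set I}) (B : {set J}) i0 :
  #|A| = N.+1 -> (1 < #|A|)%N -> (#|B| <= N.+1)%N -> i0 \in A ->
  homs s A -> homs t B -> nzmult s A -> nzmult t B -> prod_eq s A t B ->
  mult s A (s i0) = mult t B (s i0).
Proof.
move=> cA A2 cB i0A hs ht gs gt r.
have charA W : W \in powerset A -> is_char *%R 1 (subset_char s A W).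
  by rewrite powersetE; exact: subset_char_is_char.
have charB W : W \in powerset B -> is_char *%R 1 (subset_char t B W).
  by rewrite powersetE; exact: subset_char_is_char.
have sums xy : \sum_(W in powerset A) subset_char s A W xy =
               \sum_(W in powerset B) subset_char t B W xy.
  by case: xy => x y; rewrite !sum_subset_char.
have := dedekind_count charA charB sums (subset_char s A [set i0]).
rewrite (card_subset_char_class cA A2 i0A hs gs (eq_leq cA) hs gs (fun a => erefl)).
rewrite (card_subset_char_class cA A2 i0A hs gs cB ht gt (fun a => esym (r a))) A2.
case: ifP => _ counts; first exact: mult_eq_of_natr_eq.
(* If B has at most one element, the class of {i0} in B is empty, which the
   multiplicity of s_i0 in A forbids. *)
have c0 : (0 < mult s A (s i0))%N.
  by rewrite /mult card_gt0; apply/set0Pn; exists i0; rewrite inE i0A eqxx.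
by have := gs (s i0) (mult s A (s i0)); rewrite c0 leqnn counts eqxx => /(_ isT).
Qed.

End Step.

Lemma cancellation_all N : cancellation N.
Proof.
elim: N => [|N IH] I J s t A B cA cB hs ht gs gt r.
  move: cA cB; rewrite !leqn0 !cards_eq0 => /eqP -> /eqP ->.
  by rewrite /fam_seq !enum_set0.
wlog BA : I J s t A B cA cB hs ht gs gt r / (#|B| <= #|A|)%N.
  move=> W; case: (leqP #|B| #|A|) => h; first exact: W.
  by rewrite perm_sym; apply: W => //; try exact: ltnW; move=> a; rewrite r.
case: (leqP #|A| N) => cAN; first by apply: IH => //; apply: leq_trans cAN.
have cA' : #|A| = N.+1 by apply/eqP; rewrite eqn_leq cA cAN.
case: (leqP #|A| 1) => A1.
  (* A = {i0}: then B is a singleton too, and its element equals s_i0. *)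
  have /cards1P [i0 Ai0] : #|A| == 1%N by rewrite eqn_leq A1 cA'.
  case: (leqP #|B| 0) => B0.
    move: B0; rewrite leqn0 cards_eq0 => /eqP B0.
    have := r 0; rewrite B0 big_set0 Ai0 big_set1 hom0; last by apply: hs; rewrite Ai0 set11.
    by move/eqP; rewrite eq_sym oner_eq0.
  have /cards1P [j0 Bj0] : #|B| == 1%N by rewrite eqn_leq B0 (leq_trans BA A1).
  rewrite Ai0 Bj0 !fam_seq1; have -> // : s i0 = t j0.
  by apply: funext => a; have := r a; rewrite Ai0 Bj0 !big_set1.
apply: perm_from_count; last by rewrite !size_fam_seq.
move=> x /mapP [i0]; rewrite mem_enum => i0A ->; rewrite !count_fam_seq.
exact: (mult_step IH).
Qed.

End Cancellation.

Section Sequences.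
Context {K L : fieldType}.
Implicit Types u v w : seq (K -> L).

Definition seqprod u (a : K) := \prod_(x <- u) x a.
Definition homseq u := forall x, x \in u -> ishom x.
Definition nzmultseq u :=
  forall f k, (0 < k <= count_mem f u)%N -> (k%:R : L) != 0.

Definition seqfam u (i : 'I_(size u)) : K -> L := nth (fun _ => 0) u i.
Arguments seqfam : clear implicits.

Lemma fam_seq_seqfam u : fam_seq (seqfam u) setT = u.
Proof.
rewrite /fam_seq enum_setT /seqfam -enumT.
by rewrite -[RHS](mkseq_nth (fun _ => 0)) /mkseq -val_enum_ord -map_comp.
Qed.

Lemma seqprod_seqfam u a : seqprod u a = \prod_(i in setT) seqfam u i a.
Proof.
rewrite /seqprod (big_nth (fun _ => 0)) big_mkord.
by apply: eq_bigl => i; rewrite inE.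
Qed.

Lemma perm_eq_of_prod_eq u v : homseq u -> homseq v -> nzmultseq u -> nzmultseq v ->
  (forall a, seqprod u a = seqprod v a) -> perm_eq u v.
Proof.
move=> hu hv gu gv r; rewrite -(fam_seq_seqfam u) -(fam_seq_seqfam v).
apply: (@cancellation_all _ _ (maxn (size u) (size v))).
- by rewrite cardsT card_ord leq_maxl.
- by rewrite cardsT card_ord leq_maxr.
- by move=> i _; apply: hu; rewrite /seqfam mem_nth.
- by move=> i _; apply: hv; rewrite /seqfam mem_nth.
- by move=> f k; rewrite -count_fam_seq fam_seq_seqfam; apply: gu.
- by move=> f k; rewrite -count_fam_seq fam_seq_seqfam; apply: gv.
by move=> a; rewrite -!seqprod_seqfam.
Qed.

Lemma nzmultseq_char0 u : (forall p, p \notin [pchar L]) -> nzmultseq u.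
Proof.
by move=> nop f k /andP [k0 _]; apply/negP => /(natf0_pchar k0) [q qL]; have := nop q; rewrite qL.
Qed.

End Sequences.

Section Frobenius.
Context {K L : fieldType} (p : nat) (pL : p \in [pchar L]).
Implicit Types (u v w r : seq (K -> L)) (f y : K -> L).

Lemma p_gt1 : (1 < p)%N.
Proof. exact: prime_gt1 (pcharf_prime pL). Qed.

Lemma nzmultseq_charP u : nzmultseq u <-> (forall f, count_mem f u < p)%N.
Proof.
split=> [gu f|lt f k /andP [k0 kc]]; last first.
  by rewrite -(dvdn_pcharf pL); apply/negP => /(dvdn_leq k0) pk; have := lt f; lia.
rewrite ltnNge; apply/negP => pf.
by have := gu f p; rewrite (ltnW p_gt1) pf (pcharf0 pL) eqxx => /(_ isT).
Qed.

Definition frobf f : K -> L := fun a => f a ^+ p.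

Lemma frobf_hom f : ishom f -> ishom (frobf f).
Proof.
case=> f1 fM fD; split; rewrite /frobf.
- by rewrite f1 expr1n.
- by move=> a b; rewrite fM exprMn.
- by move=> a b; rewrite fD; exact: (rmorphD (pFrobenius_aut pL)).
Qed.

Lemma expp_inj (x y : L) : x ^+ p = y ^+ p -> x = y.
Proof. exact: (fmorph_inj (pFrobenius_aut pL)). Qed.

Lemma frob0 f : frob_eq p f f 0.
Proof. by move=> a; rewrite expn0 expr1. Qed.

Lemma frob_up f y l : frob_eq p (frobf f) y l -> frob_eq p f y (l + 1).
Proof.
case: l => [k|[|k]] h.
- have -> : Posz k + 1 = Posz k.+1 by rewrite -addn1 PoszD.
  by move=> a /=; rewrite h /frobf -exprM expnS.
- have -> : Negz 0 + 1 = 0 by [].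
  by move=> a /=; rewrite expn0 expr1; apply: expp_inj; have := h a; rewrite expn1.
- have -> : Negz k.+1 + 1 = Negz k by rewrite !NegzE; lia.
  by move=> a /=; apply: expp_inj; rewrite -exprM -expnSr; apply: h.
Qed.

Lemma frob_down f y l : frob_eq p y (frobf f) l -> frob_eq p y f (l - 1).
Proof.
case: l => [[|k]|k] h.
- have -> : Posz 0 - 1 = Negz 0 by [].
  by move=> a /=; rewrite expn1; have := h a; rewrite expn0 expr1.
- have -> : Posz k.+1 - 1 = Posz k by lia.
  by move=> a /=; apply: expp_inj; rewrite -exprM -expnSr; apply: h.
- have -> : Negz k - 1 = Negz k.+1 by rewrite !NegzE; lia.
  by move=> a /=; rewrite -(h a) /frobf -exprM -expnS.
Qed.

Definition twisted_cover u v := forall y, y \in v -> exists2 x, x \in u &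
  exists l : int, - ((size v)%:Z - 1) <= l * (p%:Z - 1) <= (size u)%:Z - 1 /\
                  frob_eq p x y l.

Lemma prod_nseq f n a : \prod_(x <- nseq n f) x a = f a ^+ n.
Proof. by elim: n => [|n IH]; rewrite ?big_nil ?expr0 // big_cons IH exprS. Qed.

Lemma merge_frobenius u f : homseq u -> (p <= count_mem f u)%N -> exists r,
  [/\ perm_eq u (nseq p f ++ r), homseq (frobf f :: r),
      (forall a, seqprod (frobf f :: r) a = seqprod u a) & size u = (p + size r)%N].
Proof.
move=> hu pf.
pose r := nseq (count_mem f u - p) f ++ filter (predC (pred1 f)) u.
have pe : perm_eq u (nseq p f ++ r).
  rewrite /r catA -nseqD subnKC // perm_sym.
  have -> : nseq (count_mem f u) f = filter (pred1 f) u.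
    by apply/esym; elim: (u) => //= x s IH; case: eqP => [->|_]; rewrite IH.
  by rewrite perm_filterC.
exists r; split => //.
- move=> x; rewrite inE => /orP [/eqP -> | xr].
    apply: frobf_hom; apply: hu.
    by rewrite (perm_mem pe) mem_cat mem_nseq eqxx andbT (ltnW p_gt1).
  by apply: hu; rewrite (perm_mem pe) mem_cat xr orbT.
- by move=> a; rewrite /seqprod (perm_big _ pe) big_cat big_cons prod_nseq.
by rewrite (perm_size pe) size_cat size_nseq.
Qed.

Lemma not_nzmultseq u : ~ nzmultseq u -> exists f, (p <= count_mem f u)%N.
Proof.
move=> ng; have /existsNP [f] : ~ (forall f, count_mem f u < p)%N by move/nzmultseq_charP.
by move/negP; rewrite -leqNgt; exists f.
Qed.

(* Covers survive undoing a merge, on the covering side (the twist exponent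
   grows by one) and on the covered side (it decreases by one); in both cases
   the size grows by p - 1, which pays for the change of l (p - 1). *)
Lemma cover_merge_left f r w z :
  perm_eq w (nseq p f ++ r) -> twisted_cover (frobf f :: r) z -> twisted_cover w z.
Proof.
move=> pw cov y yz; have [x xw' [l [/andP [b1 b2] fe]]] := cov y yz.
have szw : size w = (p + size r)%N by rewrite (perm_size pw) size_cat size_nseq.
have p1 := p_gt1.
move: xw'; rewrite inE => /orP [/eqP xe | xr].
  exists f; first by rewrite (perm_mem pw) mem_cat mem_nseq eqxx andbT (ltnW p1).
  exists (l + 1); split; last by rewrite xe in fe; apply: frob_up fe.
  move: b1 b2; rewrite mulrDl mul1r szw /=.
  by set X := l * _; move=> b1 b2; apply/andP; split; lia.
exists x; first by rewrite (perm_mem pw) mem_cat xr orbT.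
exists l; split => //; move: b1 b2; rewrite szw /=.
by set X := l * _; move=> b1 b2; apply/andP; split; lia.
Qed.

Lemma cover_merge_right f r w z :
  perm_eq w (nseq p f ++ r) -> twisted_cover z (frobf f :: r) -> twisted_cover z w.
Proof.
move=> pw cov x xw.
have szw : size w = (p + size r)%N by rewrite (perm_size pw) size_cat size_nseq.
have p1 := p_gt1.
move: xw; rewrite (perm_mem pw) mem_cat mem_nseq => /orP [/andP [_ /eqP xe] | xr].
  have [y yz [l [/andP [b1 b2] fe]]] := cov _ (mem_head _ _).
  exists y => //; exists (l - 1); split; last by rewrite xe; apply: frob_down fe.
  move: b1 b2; rewrite mulrBl mul1r szw /=.
  by set X := l * _; move=> b1 b2; apply/andP; split; lia.
have xr' : x \in frobf f :: r by rewrite inE xr orbT.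
have [y yz [l [/andP [b1 b2] fe]]] := cov x xr'.
exists y => //; exists l; split => //; move: b1 b2; rewrite szw /=.
by set X := l * _; move=> b1 b2; apply/andP; split; lia.
Qed.

Lemma twisted_cover_perm w z : perm_eq w z -> twisted_cover w z.
Proof.
move=> pwz y yz; exists y; first by rewrite (perm_mem pwz).
have z0 : (0 < size z)%N by case: (z) yz.
have w0 : (0 < size w)%N by rewrite (perm_size pwz).
exists 0; split; last exact: frob0.
by rewrite mul0r oppr_le0 !subr_ge0 !lez_nat z0 w0.
Qed.

(* Equal products of homomorphisms cover each other: merge repeated factors
   until the cancellation theorem applies (induction on the total size). *)
Lemma twisted_covers_of_prod_eq N u v : (size u + size v <= N)%N ->
  homseq u -> homseq v -> (forall a, seqprod u a = seqprod v a) ->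
  twisted_cover u v /\ twisted_cover v u.
Proof.
elim: N u v => [|N IH] u v sz hu hv r.
  move: sz; rewrite leqn0 addn_eq0 !size_eq0 => /andP [/eqP -> /eqP ->].
  by split => y.
have p1 := p_gt1.
case: (pselect (nzmultseq u)) => [gu|/not_nzmultseq [f pf]]; last first.
  have [w [pe hw rw sw]] := merge_frobenius hu pf.
  have sz' : (size (frobf f :: w) + size v <= N)%N by move: sz; rewrite sw /=; lia.
  have [cov1 cov2] := IH _ _ sz' hw hv (fun a => etrans (rw a) (r a)).
  by split; [exact: cover_merge_left pe cov1 | exact: cover_merge_right pe cov2].
case: (pselect (nzmultseq v)) => [gv|/not_nzmultseq [f pf]]; last first.
  have [w [pe hw rw sw]] := merge_frobenius hv pf.
  have sz' : (size u + size (frobf f :: w) <= N)%N by move: sz; rewrite sw /=; lia.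
  have [cov1 cov2] := IH _ _ sz' hu hw (fun a => etrans (r a) (esym (rw a))).
  by split; [exact: cover_merge_right pe cov1 | exact: cover_merge_left pe cov2].
have pe := perm_eq_of_prod_eq hu hv gu gv r.
by split; apply: twisted_cover_perm; rewrite // perm_sym.
Qed.

(* If u has no vanishing multiplicity and v, with the same product, is not
   longer, then they coincide: merging in v would make it strictly shorter
   than u while still cancelling against it. *)
Lemma perm_eq_of_nzmult u v : homseq u -> homseq v -> nzmultseq u ->
  (forall a, seqprod u a = seqprod v a) -> (size v <= size u)%N -> perm_eq u v.
Proof.
move=> hu hv gu r sz.
move: {2}(size v) (leqnn (size v)) => N svN.
elim: N v svN hv r sz => [|N IH] v svN hv r sz;
  (case: (pselect (nzmultseq v)) => [gv|/not_nzmultseq [f pf]];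
    first exact: perm_eq_of_prod_eq hu hv gu gv r);
  have [w [pe hw rw sw]] := merge_frobenius hv pf; have p1 := p_gt1.
  by move: svN; rewrite sw; lia.
have svN' : (size (frobf f :: w) <= N)%N by move: svN; rewrite sw /=; lia.
have sz' : (size (frobf f :: w) <= size u)%N by move: sz; rewrite sw /=; lia.
have /perm_size := IH _ svN' hw (fun a => etrans (r a) (esym (rw a))) sz'.
by move: sz; rewrite sw /=; lia.
Qed.

End Frobenius.

Lemma perm_eq_ord_maps (T : eqType) n m (x : 'I_n -> T) (y : 'I_m -> T) :
  perm_eq [seq y j | j <- enum 'I_m] [seq x i | i <- enum 'I_n] ->
  n = m /\ exists (e : m = n) (g : {perm 'I_n}),
    forall i : 'I_m, y i = x (g (cast_ord e i)).
Proof.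
move=> pe; have nm : n = m by move/perm_size: pe; rewrite !size_map -?enumT !size_enum_ord.
split => //; subst m; exists erefl.
have /tuple_permP [g E] : perm_eq [tuple y j | j < n] [tuple x i | i < n] := pe.
have E' : [tuple y j | j < n] = [tuple tnth [tuple x i | i < n] (g i) | i < n] := val_inj E.
exists g => i; rewrite cast_ord_id.
by have := congr1 (fun t => tnth t i) E'; rewrite !tnth_mktuple.
Qed.

Lemma repeated_indices (T : eqType) n p (x : 'I_n -> T) rho :
  (p <= count_mem rho [seq x i | i <- enum 'I_n])%N ->
  exists f : 'I_p -> 'I_n,
    (forall k k' : 'I_p, (k < k')%N -> (f k < f k')%N) /\
    (forall k k' : 'I_p, x (f k) = x (f k')).
Proof.
move=> prho; pose P := [seq i <- enum 'I_n | x i == rho].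
have szP : size P = count_mem rho [seq x i | i <- enum 'I_n].
  by rewrite size_filter count_map.
have pn : (p <= n)%N.
  by apply: leq_trans prho _; apply: leq_trans (count_size _ _) _; rewrite size_map -?enumT size_enum_ord.
have ltn_trans' : transitive (fun i j : 'I_n => (i < j)%N) by move=> a b c; apply: ltn_trans.
have srt : sorted (fun i j : 'I_n => (i < j)%N) P.
  by apply: sorted_filter => //; have := iota_ltn_sorted 0 n; rewrite -val_enum_ord sorted_map.
have inP (k : 'I_p) : (k < size P)%N by rewrite szP; apply: leq_trans prho.
pose f k := nth (widen_ord pn k) P k.
have xf (k : 'I_p) : x (f k) = rho.
  by have := mem_nth (widen_ord pn k) (inP k); rewrite mem_filter => /andP [/eqP].
exists f; split => [k k' kk'|k k']; last by rewrite !xf.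
rewrite /f (set_nth_default (widen_ord pn k) _ (inP k')).
by apply: (sorted_ltn_nth ltn_trans') => //; rewrite inE inP.
Qed.

Section OrdinalFamilies.
Context {K L : fieldType}.

Lemma homseq_rmorph n (f : 'I_n -> {rmorphism K -> L}) :
  homseq [seq (f i : K -> L) | i <- enum 'I_n].
Proof. by move=> x /mapP [i _ ->]; split; [exact: rmorph1 | exact: rmorphM | exact: rmorphD]. Qed.

Lemma seqprod_ord n (x : 'I_n -> K -> L) a :
  seqprod [seq x i | i <- enum 'I_n] a = \prod_(i < n) x i a.
Proof. by rewrite /seqprod big_map big_enum. Qed.

Lemma cover_indices p n m (x : 'I_n -> K -> L) (y : 'I_m -> K -> L) :
  twisted_cover p [seq x i | i <- enum 'I_n] [seq y j | j <- enum 'I_m] ->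
  forall j : 'I_m, exists (l : int) (i : 'I_n),
    - (m%:Z - 1) <= l * (p%:Z - 1) <= n%:Z - 1 /\ frob_eq p (x i) (y j) l.
Proof.
move=> cov j; have /cov [_ /mapP [i _ ->] [l]] : y j \in [seq y j | j <- enum 'I_m].
  by apply: map_f; rewrite mem_enum.
by rewrite !size_map -?enumT !size_enum_ord; exists l, i.
Qed.

Lemma perm_alternative n m (sigma : 'I_n -> {rmorphism K -> L})
  (tau : 'I_m -> {rmorphism K -> L}) :
  perm_eq [seq (sigma i : K -> L) | i <- enum 'I_n] [seq (tau j : K -> L) | j <- enum 'I_m] ->
  n = m /\ exists (e : m = n) (g : {perm 'I_n}),
    forall i : 'I_m, tau i =1 sigma (g (cast_ord e i)).
Proof.
rewrite perm_sym => /perm_eq_ord_maps [nm [e [g eqg]]].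
by split => //; exists e, g => i a; rewrite (eqg i).
Qed.

End OrdinalFamilies.

Unset Implicit Arguments.

Theorem theorem1p4 (K L : fieldType) (n m : nat)
  (sigma : 'I_n -> {rmorphism K -> L}) (tau : 'I_m -> {rmorphism K -> L}) :
  (0 < m)%N -> (m <= n)%N ->
  (forall a : K, \prod_(i < n) sigma i a = \prod_(j < m) tau j a) ->
  (n = m /\
     exists (e : m = n) (g : {perm 'I_n}),
       forall i : 'I_m, tau i =1 sigma (g (cast_ord e i)))
  \/
  (exists p : nat,
     (0 < p)%N /\ p \in [pchar K] /\ p \in [pchar L] /\
     (exists f : 'I_p -> 'I_n,
        (forall k k' : 'I_p, (k < k')%N -> (f k < f k')%N) /\
        (forall k k' : 'I_p, sigma (f k) =1 sigma (f k'))) /\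
     (forall j : 'I_m, exists (l : int) (i : 'I_n),
        - (m%:Z - 1) <= l * (p%:Z - 1) <= n%:Z - 1 /\
        frob_eq p (sigma i) (tau j) l) /\
     (forall i : 'I_n, exists (l : int) (j : 'I_m),
        - (n%:Z - 1) <= l * (p%:Z - 1) <= m%:Z - 1 /\
        frob_eq p (tau j) (sigma i) l)).
Proof.
move=> m0 mn hrel.
pose us := [seq (sigma i : K -> L) | i <- enum 'I_n].
pose ut := [seq (tau j : K -> L) | j <- enum 'I_m].
have prod_us_ut a : seqprod us a = seqprod ut a by rewrite !seqprod_ord.
have [[p pL]|nop] := pselect (exists p, p \in [pchar L]); last first.
  have char0 (u : seq (K -> L)) : nzmultseq u.
    by apply: nzmultseq_char0 => q; apply/negP => qL; apply: nop; exists q.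
  left; apply: perm_alternative.
  apply: (@perm_eq_of_prod_eq K L us ut) => //; exact: homseq_rmorph.
have [small|/(not_nzmultseq pL) [rho rep]] := pselect (nzmultseq us).
  left; apply: perm_alternative; apply: (perm_eq_of_nzmult pL) => //; try exact: homseq_rmorph.
  by rewrite !size_map -?enumT !size_enum_ord.
have [cov_t cov_s] := twisted_covers_of_prod_eq pL (leqnn _) (homseq_rmorph (f:=sigma))
  (homseq_rmorph (f:=tau)) prod_us_ut.
have [f [f_incr f_eq]] := repeated_indices rep.
have p1 := p_gt1 pL; have i0 : 'I_n by exists 0%N; lia.
right; exists p; do !split => //; first lia.
- by rewrite -(fmorph_pchar (sigma i0)).
- by exists f; split => // k k' a; rewrite (f_eq k k').
- exact: cover_indices.
exact: cover_indices.
Qed.
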